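(* Let $S$ be a set and $\emptyset\neq\mathcal{E}\subseteq\mathcal{P}(S)$. For every $A \subseteq S$, the set $\{N_{A}\neq 0\}=\{M\in C(S)\mid M\cap A\neq\emptyset\}$ belongs to $\mathfrak{H}(\mathcal{E})$ if and only if $A$ is the union of a countable (possibly empty) family of sets in $\mathcal{E}$.
   Context: $C(S)$ is the set of countable subsets of $S$; $N_A(M)=|A\cap M|$ for $A\subseteq S$, $M\in C(S)$; $\mathfrak{H}(\mathcal{E})=\sigma(\{N_E\neq0\}\mid E\in\mathcal{E})$ is a $\sigma$-field on $C(S)$. *)

Set Implicit Arguments.

Definition countable_set (S : Type) (M : S -> Prop) : Prop :=
  exists f : S -> nat, forall x y, M x -> M y -> f x = f y -> x = y.

Definition CS (S : Type) : Type := { M : S -> Prop | countable_set M }.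

Definition NA_ne0 (S : Type) (A : S -> Prop) : CS S -> Prop :=
  fun M => exists x, A x /\ proj1_sig M x.

(* sigma-field on a type X, with sets as predicates; closed under
   extensional equality of sets *)
Definition is_sigma_field (X : Type) (F : (X -> Prop) -> Prop) : Prop :=
  (forall A B : X -> Prop, F A -> (forall x, A x <-> B x) -> F B) /\
  F (fun _ => True) /\
  (forall A, F A -> F (fun x => ~ A x)) /\
  (forall A : nat -> X -> Prop, (forall n, F (A n)) -> F (fun x => exists n, A n x)).

Definition sigma_gen (X : Type) (G : (X -> Prop) -> Prop) : (X -> Prop) -> Prop :=
  fun B => forall F, is_sigma_field F -> (forall A, G A -> F A) -> F B.

Definition H_sigma (S : Type) (E : (S -> Prop) -> Prop) : (CS S -> Prop) -> Prop :=
  sigma_gen (fun B => exists e, E e /\ B = NA_ne0 e).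

Definition countable_union_of (S : Type) (E : (S -> Prop) -> Prop) (A : S -> Prop) : Prop :=
  exists (I : nat -> Prop) (f : nat -> S -> Prop),
    (forall n, I n -> E (f n)) /\ (forall x, A x <-> exists n, I n /\ f n x).

From Stdlib Require Import Classical ClassicalEpsilon Cantor.

(* (<-) If A is the union of the f n (n in I), then {N_A <> 0} is the union
   of the generators {N_(f n) <> 0}, a countable union of sets of H(E).

   (->) Call a set B of C(S) "countably determined" by E if there is a
   sequence e of members of E such that any two M1, M2 hitting exactly the
   same e n are both in B or both outside B.  These sets form a sigma-field
   (countably many sequences merge into one by Cantor pairing) containing
   the generators, hence all of H(E).  If {N_A <> 0} is determined by e, then
   every x in A lies in some e n contained in A: otherwise pick a point
   y n in e n \ A for every e n containing x; the countable sets
   {y n} and {x} ∪ {y n} hit the same e n, yet only the second meets A.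
   So A is the union of those e n that are contained in A. *)

Lemma sigma_field_union_on {X : Type} (F : (X -> Prop) -> Prop)
  (I : nat -> Prop) (A : nat -> X -> Prop) :
  is_sigma_field F -> (forall n, I n -> F (A n)) ->
  F (fun x => exists n, I n /\ A n x).
Proof.
  intros [Hext [HT [HC HU]]] HA.
  assert (Hempty : F (fun _ => False)).
  { apply (Hext (fun _ => ~ True)); [apply HC, HT | tauto]. }
  apply HU. intro n. destruct (classic (I n)) as [In | nIn].
  - apply (Hext (A n)); [apply HA, In | tauto].
  - apply (Hext _ _ Hempty). tauto.
Qed.

Lemma countable_range {S : Type} (P : nat -> Prop) (y : nat -> S) :
  countable_set (fun z => exists n, P n /\ z = y n).
Proof.
  pose (index z := epsilon (inhabits 0) (fun n => z = y n)).
  assert (Hindex : forall z n, z = y n -> z = y (index z)).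
  { intros z n Hz. apply (epsilon_spec (inhabits 0) (fun n => z = y n)).
    exists n; exact Hz. }
  exists index. intros a b [n [_ Ha]] [m [_ Hb]] Heq.
  rewrite (Hindex a n Ha), (Hindex b m Hb), Heq. reflexivity.
Qed.

Definition range_CS {S : Type} (P : nat -> Prop) (y : nat -> S) : CS S :=
  exist _ (fun z => exists n, P n /\ z = y n) (countable_range P y).

Lemma NA_ne0_union {S : Type} {A : S -> Prop} {I : nat -> Prop}
  {f : nat -> S -> Prop} :
  (forall x, A x <-> exists n, I n /\ f n x) ->
  forall M, NA_ne0 A M <-> exists n, I n /\ NA_ne0 (f n) M.
Proof.
  intros HA M. split.
  - intros [x [Ax Mx]]. destruct (proj1 (HA x) Ax) as [n [In fx]].
    exists n. split; [exact In | exists x; auto].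
  - intros [n [In [x [fx Mx]]]]. exists x. split; [apply HA; eauto | exact Mx].
Qed.

Section Determined.
Context {S : Type}.

Definition same_hits (e : nat -> S -> Prop) (M1 M2 : CS S) : Prop :=
  forall n, NA_ne0 (e n) M1 <-> NA_ne0 (e n) M2.

Definition determined_by (e : nat -> S -> Prop) (B : CS S -> Prop) : Prop :=
  forall M1 M2, same_hits e M1 M2 -> (B M1 <-> B M2).

Definition countably_determined (E : (S -> Prop) -> Prop) (B : CS S -> Prop) :=
  exists e : nat -> S -> Prop, (forall n, E (e n)) /\ determined_by e B.

Lemma determined_merge (B : nat -> CS S -> Prop) (e : nat -> nat -> S -> Prop) :
  (forall k, determined_by (e k) (B k)) ->
  forall k, determined_by (fun n => e (fst (of_nat n)) (snd (of_nat n))) (B k).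
Proof.
  intros He k M1 M2 Hhits. apply He. intro m.
  specialize (Hhits (to_nat (k, m))). cbv beta in Hhits.
  rewrite cancel_of_to in Hhits. exact Hhits.
Qed.

Lemma countably_determined_sigma (E : (S -> Prop) -> Prop) :
  (exists e, E e) -> is_sigma_field (countably_determined E).
Proof.
  intros [e0 He0]. split; [|split; [|split]].
  - intros B B' [e [He Hdet]] HBB'. exists e. split; [exact He |].
    intros M1 M2 Hhits. rewrite <- !HBB'. exact (Hdet M1 M2 Hhits).
  - exists (fun _ => e0). split; [auto | intros M1 M2 _; tauto].
  - intros B [e [He Hdet]]. exists e. split; [exact He |].
    intros M1 M2 Hhits. specialize (Hdet M1 M2 Hhits). tauto.
  - intros B HB. apply choice in HB as [e He].
    exists (fun n => e (fst (of_nat n)) (snd (of_nat n))). split.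
    + intro n. apply He.
    + intros M1 M2 Hhits.
      pose proof (determined_merge B e (fun k => proj2 (He k))) as Hdet.
      split; intros [k Hk]; exists k; apply (Hdet k M1 M2 Hhits); exact Hk.
Qed.

Lemma H_sigma_countably_determined {E : (S -> Prop) -> Prop} {B : CS S -> Prop} :
  (exists e, E e) -> H_sigma E B -> countably_determined E B.
Proof.
  intros HE HB. apply HB; [apply countably_determined_sigma, HE |].
  intros B' [e [He ->]]. exists (fun _ => e). split; [auto |].
  intros M1 M2 Hhits. apply (Hhits 0).
Qed.

Lemma escape_points (e : nat -> S -> Prop) (A : S -> Prop) (x : S) :
  ~ (exists n, (forall z, e n z -> A z) /\ e n x) ->
  exists y : nat -> S, forall n, e n x -> e n (y n) /\ ~ A (y n).
Proof.
  intro Hno. apply (choice (fun n z => e n x -> e n z /\ ~ A z)). intro n.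
  destruct (classic (exists z, e n z /\ ~ A z)) as [[z Hz] | Hall].
  - exists z. intros _. exact Hz.
  - exists x. intro ex. exfalso. apply Hno. exists n. split; [| exact ex].
    intros z ez. apply NNPP. intro nAz. apply Hall. exists z; auto.
Qed.

Lemma determined_hitting_cover {e : nat -> S -> Prop} {A : S -> Prop} :
  determined_by e (NA_ne0 A) ->
  forall x, A x -> exists n, (forall z, e n z -> A z) /\ e n x.
Proof.
  intros Hdet x Ax. apply NNPP. intro Hno.
  destruct (escape_points e A x Hno) as [y Hy].
  (* M2 = {y n | x in e n}, M1 = {x} ∪ M2 (x is put at index 0). *)
  pose (M2 := range_CS (fun n => e n x) y).
  pose (M1 := range_CS (fun n => match n with 0 => True | Datatypes.S k => e k x end)
                       (fun n => match n with 0 => x | Datatypes.S k => y k end)).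
  assert (Hhits : same_hits e M1 M2).
  { intro n. unfold NA_ne0; simpl. split.
    - intros [z [ez [[|k] [Hk ->]]]].
      + exists (y n). split; [apply (Hy n ez) | exists n; auto].
      + exists (y k). split; [exact ez | exists k; auto].
    - intros [z [ez [k [Hk ->]]]]. exists (y k).
      split; [exact ez | exists (Datatypes.S k); auto]. }
  assert (HM1 : NA_ne0 A M1) by (exists x; split; [exact Ax | exists 0; simpl; auto]).
  destruct (proj1 (Hdet M1 M2 Hhits) HM1) as [z [Az [k [ex ->]]]].
  exact (proj2 (Hy k ex) Az).
Qed.

End Determined.

Theorem theorem3p3 (S : Type) (E : (S -> Prop) -> Prop) (HE : exists e, E e)
  (A : S -> Prop) :
  H_sigma E (NA_ne0 A) <-> countable_union_of E A.
Proof.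
  split.
  - intro HA.
    destruct (H_sigma_countably_determined HE HA) as [e [He Hdet]].
    exists (fun n => forall z, e n z -> A z), e. split; [intros n _; apply He |].
    intro x. split.
    + exact (determined_hitting_cover Hdet x).
    + intros [n [Hsub ex]]. exact (Hsub x ex).
  - intros [I [f [Hf HA]]] F HF HG.
    apply (proj1 HF (fun M => exists n, I n /\ NA_ne0 (f n) M)).
    + apply sigma_field_union_on; [exact HF |].
      intros n In. apply HG. exists (f n). auto.
    + intro M. symmetry. exact (NA_ne0_union HA M).
Qed.
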